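(* Let $N\ge 1$, let $q\in\mathbb C$, and let $S_N$ be the symmetric group with group algebra $\mathbb C[S_N]$, with composition convention $(\sigma_2\sigma_1)(i)=\sigma_2(\sigma_1(i))$. For a transposition $t=(A,A+1)$ of neighboring integers and $x\in\mathbb C$, let $w_{t,x}:\mathbb C[S_N]\to\mathbb C[S_N]$ be the linear operator given on $\sigma\in S_N$ by $$w_{t,x}(\sigma)=\begin{cases}(1-x)\sigma+x\,t\sigma, & \text{if } \sigma^{-1}(A)<\sigma^{-1}(A+1),\\ (1-qx)\sigma+qx\,t\sigma, & \text{if } \sigma^{-1}(A)>\sigma^{-1}(A+1).\end{cases}$$ For transpositions of neighboring integers $t_1,\dots,t_n$ and parameters $x_1,\dots,x_n\in\mathbb C$, define coefficients $f_n(s\to\pi)$, $s,\pi\in S_N$, by $$w_{t_n,x_n}w_{t_{n-1},x_{n-1}}\cdots w_{t_1,x_1}\, s=\sum_{\pi\in S_N} f_n(s\to\pi)\,\pi .$$ Let $T=(i,i+1)$ be a transposition of neighboring integers, let $s,\pi\in S_N$ be arbitrary with $s(i)<s(i+1)$, and let $t_1,\dots,t_n$, $x_1,\dots,x_n$ be arbitrary. Then $$f_n(sT\to\pi)=\begin{cases} f_n(s\to\pi T)+(1-q)f_n(s\to\pi), & \text{if } \pi(i)>\pi(i+1),\\ q\,f_n(s\to \pi T), & \text{if } \pi(i)<\pi(i+1).\end{cases}$$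
   Context: All objects are defined in the claim. Note that $sT$ and $\pi T$ denote compositions in $S_N$ (first apply $T$, then $s$ resp. $\pi$). *)

From HB Require Import structures.
From mathcomp Require Import all_boot all_order all_algebra all_fingroup.
From mathcomp Require Import complex.
From mathcomp Require Import reals.
Set Implicit Arguments. Unset Strict Implicit. Unset Printing Implicit Defensive.
Import Order.TTheory GRing.Theory Num.Theory.
Local Open Scope ring_scope.

(* The group algebra C[S_N] is represented by finite functions 'S_N -> C;
   the points {1..N} of the paper are the ordinals 'I_N = {0..N-1}.
   MathComp convention: (s * t) x = t (s x), so the paper's product
   s2 s1 (first s1, then s2) is s1 * s2 in MathComp. *)

Notation galg K N := {ffun 'S_N -> K}.

Definition ebase (K : nzRingType) (N : nat) (sigma : 'S_N) : galg K N :=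
  [ffun tau => (tau == sigma)%:R].

(* adjacent transposition (A, A+1), for A.+1 < N (0-based) *)
Definition adjt (N : nat) (A : nat) : 'S_N.-1.+1 :=
  tperm (inord A) (inord A.+1).

(* w_{t,x} on a basis element, t = (A, A+1); paper's "t sigma" = sigma * t *)
Definition w_basis (K : comNzRingType) (N : nat) (q : K) (A : nat) (x : K)
    (sigma : 'S_N.-1.+1) : galg K N.-1.+1 :=
  if ((sigma^-1)%g (inord A) < (sigma^-1)%g (inord A.+1))%N
  then [ffun tau => (1 - x) * ebase K sigma tau
                    + x * ebase K (sigma * adjt N A)%g tau]
  else [ffun tau => (1 - q * x) * ebase K sigma tau
                    + (q * x) * ebase K (sigma * adjt N A)%g tau].

Definition w_op (K : comNzRingType) (N : nat) (q : K) (A : nat) (x : K)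
    (v : galg K N.-1.+1) : galg K N.-1.+1 :=
  [ffun tau => \sum_(sigma : 'S_N.-1.+1) v sigma * w_basis q A x sigma tau].

(* w_{t_n,x_n} ... w_{t_1,x_1} v, with t_k = (tA (k-1), tA (k-1) + 1),
   x_k = xs (k-1) *)
Fixpoint w_iter (K : comNzRingType) (N : nat) (q : K) (tA : nat -> nat)
    (xs : nat -> K) (n : nat) (v : galg K N.-1.+1) : galg K N.-1.+1 :=
  match n with
  | 0 => v
  | k.+1 => w_op q (tA k) (xs k) (w_iter q tA xs k v)
  end.

Definition fcoef (K : comNzRingType) (N : nat) (q : K) (tA : nat -> nat)
    (xs : nat -> K) (n : nat) (s pi : 'S_N.-1.+1) : K :=
  w_iter q tA xs n (ebase K s) pi.

From HB Require Import structures.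
From mathcomp Require Import all_boot all_order all_algebra all_fingroup.
From mathcomp Require Import ring zify.
From mathcomp Require Import complex.
From mathcomp Require Import reals.
Set Implicit Arguments. Unset Strict Implicit. Unset Printing Implicit Defensive.
Import Order.TTheory GRing.Theory Num.Theory.
Local Open Scope ring_scope.

(* In the paper's convention, [hecke_op i] is right multiplication by the Hecke
   generator of T = (i, i+1): it sends e_s to e_(sT) when s(i) < s(i+1) and to
   (1 - q) e_s + q e_(sT) otherwise.  Each w_(t,x) multiplies on the left, so
   the two commute: unless t tau = tau T, every coefficient involved is
   unchanged by both shifts, and when t tau = tau T it is a direct check on the
   span of e_tau and e_(tau T).  Hence f_n(sT -> pi) is the pi-coefficient of
   [hecke_op i] applied to w_(t_n,x_n) ... w_(t_1,x_1) e_s, which is the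
   claimed formula. *)

Lemma tperm_eq (T : finType) (x y u v : T) :
  x != y -> (tperm x y == tperm u v) = (tperm u v x == y).
Proof.
move=> xy; apply/eqP/eqP => [<-|]; first exact: tpermL.
case: tpermP => [-> <- // | -> <-| _ _ eq_xy]; first exact: tpermC.
by rewrite eq_xy eqxx in xy.
Qed.

Lemma mul_tperm_eq (T : finType) (x y u v : T) (s : {perm T}) : x != y ->
  (tperm x y * s == s * tperm u v)%g = (tperm u v (s x) == s y).
Proof.
move=> xy; rewrite conjgC tpermJ (inj_eq (mulgI s)) tperm_eq //.
by rewrite (inj_eq perm_inj).
Qed.

Lemma nat_of_tperm n (u u' z : 'I_n) :
  tperm u u' z = (if z == u then u' else if z == u' then u else z) :> nat.
Proof.
case: tpermP => [->|->|/eqP/negPf-> /eqP/negPf->]; rewrite ?eqxx //.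
by case: eqP => [->|].
Qed.

Lemma ltn_tperm_succ n (u u' x y : 'I_n) :
  u' = u.+1 :> nat -> x != y -> tperm u u' x != y ->
  (tperm u u' x < tperm u u' y)%N = (x < y)%N.
Proof.
rewrite -!val_eqE /= !nat_of_tperm -!val_eqE /=.
by repeat case: ifP; lia.
Qed.

Section AdjacentTranspositions.
Variable m : nat.
Local Notation adjt := (adjt m.+1).
Implicit Types (s : 'S_m.+1) (i k : nat).

Definition ascent s k := (s (inord k) < s (inord k.+1))%N.

(* In the paper's notation: sT_i = T_k s, i.e. s maps {i, i+1} onto {k, k+1}. *)
Definition intertwines i k s := (adjt i * s == s * adjt k)%g.

Lemma inord_succ_neq j : (j.+1 < m.+1)%N -> inord j != inord j.+1 :> 'I_m.+1.
Proof.
move=> hj; rewrite -val_eqE /= !inordK //; lia.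
Qed.

Lemma inord_succ j : (j.+1 < m.+1)%N -> @inord m j.+1 = (@inord m j).+1 :> nat.
Proof. by move=> hj; rewrite !inordK // ltnW. Qed.

Variables (i k : nat) (hi : (i.+1 < m.+1)%N) (hk : (k.+1 < m.+1)%N).

Lemma ascent_adjt_mul s : ascent (adjt i * s) i = ~~ ascent s i.
Proof.
rewrite /ascent !permM tpermL tpermR ltnNge leq_eqVlt.
by rewrite val_eqE (inj_eq perm_inj) (negPf (inord_succ_neq hi)).
Qed.

Lemma intertwinesE s :
  intertwines i k s = (adjt k (s (inord i)) == s (inord i.+1)).
Proof. exact/mul_tperm_eq/inord_succ_neq. Qed.

Lemma intertwinesV s : intertwines k i s^-1 = intertwines i k s.
Proof.
rewrite /intertwines -(inj_eq (@invg_inj _)) !invMg !tpermV invgK.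
by rewrite eq_sym.
Qed.

Lemma intertwines_adjt_mul s : intertwines i k (adjt i * s) = intertwines i k s.
Proof. by rewrite /intertwines -(inj_eq (mulgI (adjt i))) !mulgA tperm2 !mul1g. Qed.

Lemma intertwines_mul_adjt s : intertwines i k (s * adjt k) = intertwines i k s.
Proof.
by rewrite /intertwines -(inj_eq (mulIg (adjt k))) -!mulgA tperm2 !mulg1.
Qed.

Lemma ascent_mul_adjt s :
  ~~ intertwines i k s -> ascent (s * adjt k) i = ascent s i.
Proof.
rewrite intertwinesE /ascent !permM => ntw.
by rewrite ltn_tperm_succ ?inord_succ // (inj_eq perm_inj) inord_succ_neq.
Qed.

Lemma ascent_intertwines s : intertwines i k s -> ascent s^-1 k = ascent s i.
Proof.
rewrite intertwinesE /ascent => /eqP.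
case: tpermP => [sp sp' | sp sp' | _ _ /perm_inj/eqP]; last first.
  by rewrite (negPf (inord_succ_neq hi)).
all: rewrite -[in LHS]sp [in LHS]sp' !permK sp -sp' !inord_succ //.
all: by rewrite ?ltnSn // !ltnNge !leqnSn.
Qed.

End AdjacentTranspositions.

Lemma ascent_inv_adjt_mul m i k (s : 'S_m.+1) :
  (i.+1 < m.+1)%N -> (k.+1 < m.+1)%N -> ~~ intertwines i k s ->
  ascent (adjt m.+1 i * s)^-1 k = ascent s^-1 k.
Proof.
move=> hi hk tw; rewrite invMg tpermV ascent_mul_adjt //.
by rewrite intertwinesV.
Qed.

Lemma sum_mul_eq (R : pzSemiRingType) (I : finType) (F : I -> R) j :
  \sum_i F i * (i == j)%:R = F j.
Proof.
rewrite (bigD1 j) //= eqxx mulr1 big1 ?addr0 // => i /negPf->.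
exact: mulr0.
Qed.

Section HeckeOperator.
Variables (K : comNzRingType) (m : nat) (q : K).
Local Notation adjt := (adjt m.+1).
Local Notation galg := (galg K m.+1).
Local Notation w_op := (w_op (N := m.+1) q).
Implicit Types (s tau : 'S_m.+1) (v : galg).

Lemma eq_mul_adjt A s tau : (tau == s * adjt A)%g = (s == tau * adjt A)%g.
Proof. by rewrite eq_sym (canF_eq (mulgK _)) tpermV. Qed.

Lemma w_opE A x v tau :
  w_op A x v tau = (if ascent tau^-1 A then 1 - x else 1 - q * x) * v tau
    + (if ascent (tau * adjt A)^-1 A then x else q * x) * v (tau * adjt A)%g.
Proof.
rewrite ffunE; transitivity
  (\sum_s ((if ascent s^-1 A then 1 - x else 1 - q * x) * v s) * (s == tau)%:R
   + \sum_s ((if ascent s^-1 A then x else q * x) * v s) * (s == tau * adjt A)%g%:R).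
  rewrite -big_split; apply: eq_bigr => s _.
  rewrite /w_basis -/(ascent s^-1 A).
  by case: ifP => _; rewrite !ffunE eq_mul_adjt [tau == s]eq_sym /=; ring.
by rewrite (sum_mul_eq _ tau) (sum_mul_eq _ (tau * adjt A)%g).
Qed.

Definition hecke_op i v : galg :=
  [ffun tau => (if ascent tau i then 0 else 1 - q) * v tau
     + (if ascent (adjt i * tau) i then 1 else q) * v (adjt i * tau)%g].

Lemma hecke_opE i v tau : hecke_op i v tau =
  (if ascent tau i then 0 else 1 - q) * v tau
    + (if ascent (adjt i * tau) i then 1 else q) * v (adjt i * tau)%g.
Proof. exact: ffunE. Qed.

Variables (i : nat) (hi : (i.+1 < m.+1)%N).

Lemma hecke_op_ebase s :
  ascent s i -> hecke_op i (ebase K s) = ebase K (adjt i * s)%g.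
Proof.
move=> hs; apply/ffunP => tau; rewrite hecke_opE !ffunE (canF_eq (tpermKg _ _)).
have nTs : (s != adjt i * s)%g.
  by apply/eqP => e; move: (ascent_adjt_mul hi s); rewrite -e hs.
case: (eqVneq tau s) => [->|_]; first by rewrite hs (negPf nTs) mul0r mulr0 addr0.
rewrite mulr0 add0r -/(adjt i).
case: (eqVneq tau (adjt i * s)%g) => [->|_]; last by rewrite mulr0.
by rewrite mulgA tperm2 mul1g hs mulr1.
Qed.

Lemma w_op_hecke_op A x v : (A.+1 < m.+1)%N ->
  w_op A x (hecke_op i v) = hecke_op i (w_op A x v).
Proof.
move=> hA; apply/ffunP => tau; rewrite w_opE !hecke_opE !w_opE !mulgA.
have [tw | tw] := boolP (intertwines i A tau).
  rewrite (eqP tw) -mulgA tperm2 mulg1 invMg tpermV ascent_adjt_mul //.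
  rewrite -(eqP tw) ascent_adjt_mul // (ascent_intertwines hi hA tw).
  by case: (ascent tau i) => /=; ring.
rewrite (ascent_mul_adjt hi hA tw) (ascent_mul_adjt hi hA (s := adjt i * tau)).
  rewrite (ascent_inv_adjt_mul hi hA tw) -mulgA (ascent_inv_adjt_mul hi hA).
    set c1 := (if ascent tau^-1 A then _ else _).
    set c2 := (if ascent (tau * adjt A)^-1 A then _ else _).
    set h1 := (if ascent tau i then _ else _).
    set h2 := (if ascent (adjt i * tau) i then _ else _).
    by ring.
  by rewrite intertwines_mul_adjt.
by rewrite intertwines_adjt_mul.
Qed.

Lemma w_iter_hecke_op tA xs n v :
  (forall k, (k < n)%N -> ((tA k).+1 < m.+1)%N) ->
  w_iter (N := m.+1) q tA xs n (hecke_op i v)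
  = hecke_op i (w_iter (N := m.+1) q tA xs n v).
Proof.
elim: n => [//|n IHn] htA /=.
by rewrite IHn => [|k hk]; rewrite ?w_op_hecke_op ?htA // ltnS ltnW.
Qed.

End HeckeOperator.

Theorem proposition2p1 (R : realType) (N : nat) (hN : (1 <= N)%N) (q : R[i])
    (n : nat) (tA : nat -> nat) (xs : nat -> R[i])
    (htA : forall k, (k < n)%N -> ((tA k).+1 < N)%N)
    (i : nat) (hi : (i.+1 < N)%N) (s pi : 'S_N.-1.+1)
    (hs : (s (inord i) < s (inord i.+1))%N) :
  fcoef q tA xs n (adjt N i * s)%g pi =
  (if (pi (inord i) > pi (inord i.+1))%N
   then fcoef q tA xs n s (adjt N i * pi)%g + (1 - q) * fcoef q tA xs n s pi
   else q * fcoef q tA xs n s (adjt N i * pi)%g).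
Proof.
case: N hN htA hi s pi hs => [//|m] _ htA hi s pi hs.
rewrite /fcoef -(hecke_op_ebase q hi hs) w_iter_hecke_op // hecke_opE.
have descent : (pi (inord i.+1) < pi (inord i))%N = ~~ ascent pi i.
  by rewrite -ascent_adjt_mul // /ascent !permM tpermL tpermR.
rewrite ascent_adjt_mul // descent.
by case: (ascent pi i); rewrite /= ?mul0r ?add0r ?mul1r // addrC.
Qed.
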